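(* There is a sentence $\varphi$ of the first-order language with equality over a single binary relation symbol $R$, using only the three variables $x,y,z$, such that for every structure $(W,S)$ (with $S$ interpreting $R$): $(W,S)\models\varphi$ if and only if $(W,S)$ is isomorphic to a substructure of $(P,Z)$.
   Context: $(P,Z)$ is the ''pentagon'': $P=\{0,1,2,3,4\}$ and $Z=\{(i,j): i<5,\ j\equiv i+1 \pmod 5 \text{ or } j\equiv i-1 \pmod 5\}$. A substructure of $(P,Z)$ is $(A, Z\cap (A\times A))$ for a nonempty $A\subseteq P$. A formula ''uses only the variables $x,y,z$'' if every variable occurring in it, free or bound, is one of $x,y,z$ (variables may be requantified). *)

From mathcomp Require Import all_boot.
Set Implicit Arguments. Unset Strict Implicit. Unset Printing Implicit Defensive.

Inductive var3 : Type := vx | vy | vz.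

Definition var3_eqb (u v : var3) : bool :=
  match u, v with
  | vx, vx | vy, vy | vz, vz => true
  | _, _ => false
  end.

Inductive fo3 : Type :=
  | FEq  : var3 -> var3 -> fo3
  | FRel : var3 -> var3 -> fo3
  | FNeg : fo3 -> fo3
  | FAnd : fo3 -> fo3 -> fo3
  | FOr  : fo3 -> fo3 -> fo3
  | FImp : fo3 -> fo3 -> fo3
  | FEx  : var3 -> fo3 -> fo3
  | FAll : var3 -> fo3 -> fo3.

Fixpoint free_in (u : var3) (phi : fo3) : bool :=
  match phi with
  | FEq a b | FRel a b => var3_eqb u a || var3_eqb u b
  | FNeg p => free_in u p
  | FAnd p q | FOr p q | FImp p q => free_in u p || free_in u q
  | FEx v p | FAll v p => ~~ var3_eqb u v && free_in u p
  end.

Definition sentence (phi : fo3) : Prop :=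
  forall u, free_in u phi = false.

Definition upd (W : Type) (e : var3 -> W) (v : var3) (a : W) : var3 -> W :=
  fun u => if var3_eqb u v then a else e u.

Fixpoint sat (W : Type) (S : W -> W -> Prop) (e : var3 -> W) (phi : fo3) : Prop :=
  match phi with
  | FEq a b => e a = e b
  | FRel a b => S (e a) (e b)
  | FNeg p => ~ sat S e p
  | FAnd p q => sat S e p /\ sat S e q
  | FOr p q => sat S e p \/ sat S e q
  | FImp p q => sat S e p -> sat S e q
  | FEx v p => exists a : W, sat S (upd e v a) p
  | FAll v p => forall a : W, sat S (upd e v a) p
  end.

Definition models (W : Type) (S : W -> W -> Prop) (phi : fo3) : Prop :=
  forall e : var3 -> W, sat S e phi.

(* The pentagon (P, Z): P = {0,...,4}, Z = {(i,j) : j = i+1 or j = i-1 mod 5}. *)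
Definition pentZ (i j : 'I_5) : bool :=
  (j %% 5 == (i + 1) %% 5) || ((j + 1) %% 5 == i %% 5).

Definition iso_to_sub_pentagon (W : Type) (S : W -> W -> Prop) : Prop :=
  exists (A : {set 'I_5}) (f : W -> 'I_5) (g : 'I_5 -> W),
    A != set0 /\
    (forall w, f w \in A) /\
    (forall w, g (f w) = w) /\
    (forall a, a \in A -> f (g a) = a) /\
    (forall w1 w2, S w1 w2 <-> pentZ (f w1) (f w2)).

(* The pentagon C5 is axiomatised, among nonempty graphs, by a conjunction
   [phi] of six three-variable sentences: R is symmetric and irreflexive,
   there is no triangle, any three distinct points span an edge, and two
   patterns (a "C4" and a "2K2" configuration) are excluded.

   Soundness: the pentagon satisfies the universal strengthenings of these
   six properties (a finite check); universal properties pass to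
   substructures, i.e. along embeddings; and the strengthenings imply the
   axioms.

   Completeness: fix a point x0 of a model.  Its neighbours are pairwise
   nonadjacent, its other non-neighbours pairwise adjacent, and there are at
   most two of each.  Depending on whether some edge joins a neighbour [a]
   to a non-neighbour [c], sending x0 to 0, the neighbours to {1,4} and the
   non-neighbours to {2,3} (with a |-> 1 and c |-> 2 or 3) is an embedding
   into the pentagon. *)

From Stdlib Require Import Classical ClassicalEpsilon.
From mathcomp Require Import all_boot.
Set Implicit Arguments. Unset Strict Implicit. Unset Printing Implicit Defensive.

Definition phi_sym := FAll vx (FAll vy (FImp (FRel vx vy) (FRel vy vx))).
Definition phi_irr := FAll vx (FNeg (FRel vx vx)).
Definition phi_tri :=
  FAll vx (FAll vy (FAll vz (FNeg (FAnd (FRel vx vy) (FAnd (FRel vy vz) (FRel vz vx)))))).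
Definition phi_ind :=
  FAll vx (FAll vy (FAll vz (FImp (FNeg (FEq vx vy)) (FImp (FNeg (FEq vy vz))
    (FImp (FNeg (FEq vx vz)) (FOr (FRel vx vy) (FOr (FRel vy vz) (FRel vx vz)))))))).
Definition phi_c4 :=
  FNeg (FEx vx (FEx vy (FAnd (FNeg (FEq vx vy)) (FAnd (FNeg (FRel vx vy))
    (FAnd (FAll vz (FImp (FRel vx vz) (FRel vy vz)))
      (FEx vz (FAnd (FRel vx vz) (FEx vy (FAnd (FRel vx vy) (FNeg (FEq vy vz))))))))))).
Definition phi_2k2 :=
  FNeg (FEx vx (FEx vy (FAnd (FRel vx vy)
    (FAnd (FAll vz (FImp (FAnd (FNeg (FEq vz vx)) (FNeg (FRel vx vz)))
                         (FAnd (FNeg (FEq vz vy)) (FNeg (FRel vy vz)))))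
      (FEx vz (FAnd (FNeg (FEq vz vx)) (FAnd (FNeg (FRel vx vz))
        (FEx vy (FAnd (FNeg (FEq vy vx)) (FAnd (FNeg (FRel vx vy)) (FNeg (FEq vy vz)))))))))))).
Definition phi : fo3 :=
  FAnd phi_sym (FAnd phi_irr (FAnd phi_tri (FAnd phi_ind (FAnd phi_c4 phi_2k2)))).

Lemma phi_sentence : sentence phi.
Proof. by case. Qed.

(* What [phi] says, read off in the metalanguage.  [ax_c4]: no two distinct
   nonadjacent points a, b with N(a) included in N(b) and |N(a)| >= 2.
   [ax_2k2]: no edge ab such that every point outside the closed
   neighbourhood of a is outside that of b, while at least two are. *)
Record pentagon_axioms (W : Type) (S : W -> W -> Prop) : Prop := {
  ax_sym : forall a b, S a b -> S b a;
  ax_irr : forall a, ~ S a a;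
  ax_tri : forall a b c, ~ (S a b /\ S b c /\ S c a);
  ax_ind : forall a b c, a <> b -> b <> c -> a <> c -> S a b \/ S b c \/ S a c;
  ax_c4 : ~ (exists a b, a <> b /\ ~ S a b /\ (forall z, S a z -> S b z) /\
               exists z, S a z /\ exists y, S a y /\ y <> z);
  ax_2k2 : ~ (exists a b, S a b /\
                (forall z, z <> a /\ ~ S a z -> z <> b /\ ~ S b z) /\
                exists z, z <> a /\ ~ S a z /\ exists y, y <> a /\ ~ S a y /\ y <> z) }.

Lemma sat_phi (W : Type) (S : W -> W -> Prop) (e : var3 -> W) :
  sat S e phi <-> pentagon_axioms S.
Proof. by split=> [[? [? [? [? [? ?]]]]]|[]]; [constructor | do !split]. Qed.

Record universal_axioms (V : Type) (R : V -> V -> Prop) : Prop := {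
  u_sym : forall a b, R a b -> R b a;
  u_irr : forall a, ~ R a a;
  u_tri : forall a b c, R a b -> R b c -> R c a -> False;
  u_ind : forall a b c, a <> b -> b <> c -> a <> c -> R a b \/ R b c \/ R a c;
  u_c4 : forall a b k l, a <> b -> ~ R a b -> R a k -> R a l -> k <> l ->
           R b k -> R b l -> False;
  u_2k2 : forall a b k l, R a b -> k <> a -> ~ R a k -> l <> a -> ~ R a l ->
           k <> l -> k <> b -> ~ R b k -> l <> b -> ~ R b l -> False }.

Lemma universal_pentagon_axioms (W : Type) (S : W -> W -> Prop) :
  universal_axioms S -> pentagon_axioms S.
Proof.
case=> sym irr tri ind c4 k2; constructor => //.
- by move=> a b c [Sab [Sbc Sca]]; exact: tri Sab Sbc Sca.
- move=> [a [b [ab [nSab [sub [z [Saz [y [Say yz]]]]]]]]].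
  exact: c4 ab nSab Saz Say (nesym yz) (sub _ Saz) (sub _ Say).
- move=> [a [b [Sab [out [z [za [nSaz [y [ya [nSay yz]]]]]]]]]].
  have [zb nSbz] := out z (conj za nSaz); have [yb nSby] := out y (conj ya nSay).
  exact: k2 Sab za nSaz ya nSay (nesym yz) zb nSbz yb nSby.
Qed.

Definition embedding (W V : Type) (S : W -> W -> Prop) (R : V -> V -> Prop)
    (f : W -> V) : Prop :=
  injective f /\ forall u v, S u v <-> R (f u) (f v).

Lemma embedding_universal_axioms (W V : Type) (S : W -> W -> Prop)
    (R : V -> V -> Prop) (f : W -> V) :
  embedding S R f -> universal_axioms R -> universal_axioms S.
Proof.
move=> [inj rel] [sym irr tri ind c4 k2].
have ne u v : u <> v -> f u <> f v by move=> uv /inj.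
have nrel u v : ~ S u v -> ~ R (f u) (f v) by move=> nS /rel.
constructor.
- by move=> a b /rel /sym /rel.
- by move=> a /rel; apply: irr.
- by move=> a b c /rel Sab /rel Sbc /rel Sca; exact: tri Sab Sbc Sca.
- move=> a b c ab bc ac; have := ind _ _ _ (ne _ _ ab) (ne _ _ bc) (ne _ _ ac).
  by rewrite -!rel.
- move=> a b k l ab nSab /rel Sak /rel Sal kl /rel Sbk /rel Sbl.
  exact: c4 (ne _ _ ab) (nrel _ _ nSab) Sak Sal (ne _ _ kl) Sbk Sbl.
- move=> a b k l /rel Sab ka nSak la nSal kl kb nSbk lb nSbl.
  exact: k2 Sab (ne _ _ ka) (nrel _ _ nSak) (ne _ _ la) (nrel _ _ nSal)
    (ne _ _ kl) (ne _ _ kb) (nrel _ _ nSbk) (ne _ _ lb) (nrel _ _ nSbl).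
Qed.

Notation pentagon := (fun i j : 'I_5 => pentZ i j).

Ltac case_I5 i := case: i => [[|[|[|[|[|?]]]]] ?] //.

Lemma pentZ_sym (i j : 'I_5) : pentZ i j -> pentZ j i.
Proof. by case_I5 i; case_I5 j. Qed.

Lemma pentagon_universal_axioms : universal_axioms pentagon.
Proof.
constructor.
- exact: pentZ_sym.
- by move=> i; case_I5 i.
- by move=> i j k; case_I5 i; case_I5 j; case_I5 k.
- move=> i j k /eqP + /eqP + /eqP.
  by case_I5 i; case_I5 j; case_I5 k; auto.
- move=> i j k l /eqP + /negP + + + /eqP.
  by case_I5 i; case_I5 j; case_I5 k; case_I5 l.
- move=> i j k l + /eqP + /negP + /eqP + /negP + /eqP + /eqP + /negP + /eqP + /negP.
  by case_I5 i; case_I5 j; case_I5 k; case_I5 l.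
Qed.

Definition holds (P : Prop) : bool :=
  if excluded_middle_informative P then true else false.

Lemma holdsP (P : Prop) : reflect P (holds P).
Proof. by rewrite /holds; case: excluded_middle_informative => H; constructor. Qed.

Definition p0 : 'I_5 := @Ordinal 5 0 isT.
Definition p1 : 'I_5 := @Ordinal 5 1 isT.
Definition p2 : 'I_5 := @Ordinal 5 2 isT.
Definition p3 : 'I_5 := @Ordinal 5 3 isT.
Definition p4 : 'I_5 := @Ordinal 5 4 isT.

Section Classification.

Variables (W : Type) (S : W -> W -> Prop) (x0 : W).
Hypothesis ax : pentagon_axioms S.

Definition nonnbr (v : W) : Prop := v <> x0 /\ ~ S x0 v.

Lemma nbr_nonnbr_neq u v : S x0 u -> nonnbr v -> u <> v.
Proof. by move=> Su [_ nSv] uv; apply: nSv; rewrite -uv. Qed.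

(* No triangle: the neighbours of x0 are pairwise nonadjacent. *)
Lemma nbrs_nonadjacent u v : S x0 u -> S x0 v -> ~ S u v.
Proof. by move=> Su Sv Suv; exact: ax_tri ax x0 u v (conj Su (conj Suv (ax_sym ax Sv))). Qed.

(* No independent triple: the non-neighbours of x0 are pairwise adjacent. *)
Lemma nonnbrs_adjacent u v : nonnbr u -> nonnbr v -> u <> v -> S u v.
Proof.
by move=> [ux nSu] [vx nSv] uv; case: (ax_ind ax (nesym ux) uv (nesym vx)) => [|[]].
Qed.

Lemma nbrs_at_most_two a b b' :
  S x0 a -> S x0 b -> S x0 b' -> b <> a -> b' <> a -> b = b'.
Proof.
move=> Sa Sb Sb' ba b'a; apply: NNPP => bb'.
by case: (ax_ind ax (nesym ba) bb' (nesym b'a)) => [|[]]; apply: nbrs_nonadjacent.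
Qed.

Lemma nonnbrs_at_most_two c d d' :
  nonnbr c -> nonnbr d -> nonnbr d' -> d <> c -> d' <> c -> d = d'.
Proof.
move=> Nc Nd Nd' dc d'c; apply: NNPP => dd'.
have Scd := nonnbrs_adjacent Nc Nd (nesym dc).
have Sdd' := nonnbrs_adjacent Nd Nd' dd'.
exact: ax_tri ax c d d' (conj Scd (conj Sdd' (nonnbrs_adjacent Nd' Nc d'c))).
Qed.

Section Roles.

(* A neighbour [a] and a non-neighbour [c] of x0 (when these exist), and
   whether some edge joins the neighbours to the non-neighbours. *)
Variables (a c : W) (linked : bool).

Definition nbr_pos (u : W) : 'I_5 := if holds (u = a) then p1 else p4.
Definition nonnbr_pos (v : W) : 'I_5 := if holds (v = c) == linked then p2 else p3.

Definition role (w : W) : 'I_5 :=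
  if holds (w = x0) then p0
  else if holds (S x0 w) then nbr_pos w else nonnbr_pos w.

Hypothesis nbr_unique :
  forall b b', S x0 b -> S x0 b' -> b <> a -> b' <> a -> b = b'.
Hypothesis nonnbr_unique :
  forall d d', nonnbr d -> nonnbr d' -> d <> c -> d' <> c -> d = d'.
Hypothesis cross :
  forall u v, S x0 u -> nonnbr v -> S u v <-> pentZ (nbr_pos u) (nonnbr_pos v).

Lemma role_cases w :
  [/\ w = x0 & role w = p0] \/ [/\ S x0 w & role w = nbr_pos w] \/
  [/\ nonnbr w & role w = nonnbr_pos w].
Proof.
rewrite /role; case: holdsP => [|wx]; first by left.
by case: holdsP => [|nSw]; [right; left | right; right].
Qed.

(* The three classes land in {0}, {1,4}, {2,3}; within a class at most
   two points occur, told apart by being a (resp. c) or not. *)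
Lemma role_inj : injective role.
Proof.
move=> u v.
have [[-> ->]|[[Su ->]|[Nu ->]]] := role_cases u;
have [[-> ->]|[[Sv ->]|[Nv ->]]] := role_cases v;
  rewrite /nbr_pos /nonnbr_pos //;
  do ?[case: holdsP => [->|?]]; case: linked => // _;
  by [apply: nbr_unique | apply: nonnbr_unique].
Qed.

Lemma role_rel u v : S u v <-> pentZ (role u) (role v).
Proof.
have [[-> ->]|[[Su ->]|[Nu ->]]] := role_cases u;
have [[-> ->]|[[Sv ->]|[Nv ->]]] := role_cases v.
- by split=> // /(ax_irr ax).
- by split=> // _; rewrite /nbr_pos; case: holdsP.
- by split=> [/Nv.2 //|]; rewrite /nonnbr_pos; case: holdsP; case: linked.
- by split=> _; [rewrite /nbr_pos; case: holdsP | exact: ax_sym].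
- by split=> [/(nbrs_nonadjacent Su Sv) //|]; rewrite /nbr_pos; do 2 case: holdsP.
- exact: cross.
- by split=> [/(ax_sym ax)/Nu.2 //|]; rewrite /nonnbr_pos; case: holdsP; case: linked.
- by split=> [/(ax_sym ax)/(cross Sv Nu)/pentZ_sym | /pentZ_sym/(cross Sv Nu)/(ax_sym ax)].
- have [<-|uv] := classic (u = v).
    by split=> [/(ax_irr ax)|] //; rewrite /nonnbr_pos; case: holdsP; case: linked.
  split=> _; last exact: nonnbrs_adjacent.
  rewrite /nonnbr_pos; case: holdsP => [uc|uc]; case: holdsP => [vc|vc];
    case: linked => //; first [by case: uv; rewrite uc vc | by case: uv; exact: nonnbr_unique].
Qed.

Lemma role_embedding : embedding S pentagon role.
Proof. by split; [exact: role_inj | exact: role_rel]. Qed.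

End Roles.

Section Linked.

Variables a c : W.
Hypotheses (Sa : S x0 a) (Nc : nonnbr c) (Sac : S a c).

(* The other neighbour is not adjacent to c: otherwise N(x0) would be
   included in N(c), a forbidden C4 configuration. *)
Lemma linked_other_nbr b : S x0 b -> b <> a -> ~ S b c.
Proof.
move=> Sb ba Sbc; apply: (ax_c4 ax); exists x0, c.
split; first exact: nesym Nc.1.
split; first exact: Nc.2.
split; last by exists a; split=> //; exists b.
move=> z Sz; have [->|za] := classic (z = a); first exact: ax_sym.
by rewrite (nbrs_at_most_two Sa Sz Sb za ba); exact: ax_sym.
Qed.

(* a is not adjacent to the other non-neighbour d: no triangle a c d. *)
Lemma linked_other_nonnbr d : nonnbr d -> d <> c -> ~ S a d.
Proof.
move=> Nd dc Sad.
exact: ax_tri ax a c d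
  (conj Sac (conj (nonnbrs_adjacent Nc Nd (nesym dc)) (ax_sym ax Sad))).
Qed.

(* The two remaining points are adjacent: a, b, d span an edge. *)
Lemma linked_others b d : S x0 b -> b <> a -> nonnbr d -> d <> c -> S b d.
Proof.
move=> Sb ba Nd dc.
case: (ax_ind ax (nesym ba) (nbr_nonnbr_neq Sb Nd) (nbr_nonnbr_neq Sa Nd)) => [|[]] //.
- by move/(nbrs_nonadjacent Sa Sb).
- by move/(linked_other_nonnbr Nd dc).
Qed.

(* Here a |-> 1, the other neighbour |-> 4, c |-> 2, the other |-> 3. *)
Lemma linked_embedding : exists f : W -> 'I_5, embedding S pentagon f.
Proof.
exists (role a c true); apply: role_embedding.
- by move=> b b'; exact: nbrs_at_most_two Sa.
- by move=> d d'; exact: nonnbrs_at_most_two Nc.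
move=> u v Su Nv; rewrite /nbr_pos /nonnbr_pos.
case: holdsP => [->|ua]; case: holdsP => [->|vc] //=.
- by split=> // /(linked_other_nonnbr Nv vc).
- by split=> // /(linked_other_nbr Su ua).
- by split=> // _; exact: linked_others.
Qed.

End Linked.

Section Unlinked.

Hypothesis unlinked : forall u v, S x0 u -> nonnbr v -> ~ S u v.

(* If x0 has a neighbour a, then it has at most one non-neighbour:
   otherwise x0 a would be a forbidden 2K2 configuration. *)
Lemma unlinked_nonnbr_unique a c d :
  S x0 a -> nonnbr c -> nonnbr d -> d <> c -> False.
Proof.
move=> Sa Nc Nd dc; apply: (ax_2k2 ax); exists x0, a.
split=> //; split.
  by move=> z Nz; split; [exact: nesym (nbr_nonnbr_neq Sa Nz) | exact: unlinked].
by move: Nc Nd => [cx nSc] [dx nSd]; exists c; do !split=> //; exists d.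
Qed.

(* If x0 has two neighbours, it has no non-neighbour: a, b, c would be
   an independent triple. *)
Lemma unlinked_no_nonnbr a b c : S x0 a -> S x0 b -> b <> a -> nonnbr c -> False.
Proof.
move=> Sa Sb ba Nc.
case: (ax_ind ax (nesym ba) (nbr_nonnbr_neq Sb Nc) (nbr_nonnbr_neq Sa Nc)) => [|[]].
- exact: nbrs_nonadjacent.
- exact: unlinked.
- exact: unlinked.
Qed.

(* Here a |-> 1, the other neighbour |-> 4, c |-> 3, the other |-> 2,
   where a and c are chosen among the neighbours, resp. non-neighbours,
   whenever there are any. *)
Lemma unlinked_embedding : exists f : W -> 'I_5, embedding S pentagon f.
Proof.
have [a Ha] : exists a, (exists b, S x0 b) -> S x0 a.
  by have [[b Sb]|nb] := classic (exists b, S x0 b); [exists b | exists x0].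
have [c Hc] : exists c, (exists d, nonnbr d) -> nonnbr c.
  by have [[d Nd]|nd] := classic (exists d, nonnbr d); [exists d | exists x0].
exists (role a c false); apply: role_embedding.
- by move=> b b' Sb; apply: nbrs_at_most_two (Ha (ex_intro _ b Sb)) Sb.
- by move=> d d' Nd; apply: nonnbrs_at_most_two (Hc (ex_intro _ d Nd)) Nd.
move=> u v Su Nv; split=> [/(unlinked Su Nv) //|]; rewrite /nbr_pos /nonnbr_pos.
case: holdsP => [_|ua]; case: holdsP => [_|vc] //= _.
- by case: (unlinked_nonnbr_unique Su (Hc (ex_intro _ v Nv)) Nv vc).
- by case: (unlinked_no_nonnbr (Ha (ex_intro _ u Su)) Su ua Nv).
Qed.

End Unlinked.

Theorem pentagon_embedding : exists f : W -> 'I_5, embedding S pentagon f.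
Proof.
have [[a [c [Sa [Nc Sac]]]]|nlinked] :=
  classic (exists a c, S x0 a /\ nonnbr c /\ S a c).
- exact: linked_embedding Sa Nc Sac.
- apply: unlinked_embedding => u v Su Nv Suv; apply: nlinked.
  by exists u, v.
Qed.

End Classification.

Lemma embedding_iso (W : Type) (S : W -> W -> Prop) (x0 : W) (f : W -> 'I_5) :
  embedding S pentagon f -> iso_to_sub_pentagon S.
Proof.
move=> [inj rel].
pose A := [set i | holds (exists w, f w = i)].
pose g i := epsilon (inhabits x0) (fun w => f w = i).
have gK i : i \in A -> f (g i) = i.
  by rewrite inE => /holdsP; exact: epsilon_spec.
have fA w : f w \in A by rewrite inE; apply/holdsP; exists w.
exists A, f, g; do !split=> //; first by apply/set0Pn; exists (f x0).
by move=> w; apply: inj; rewrite gK.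
Qed.

Lemma iso_embedding (W : Type) (S : W -> W -> Prop) :
  iso_to_sub_pentagon S -> exists f : W -> 'I_5, embedding S pentagon f.
Proof.
move=> [A [f [g [_ [_ [fK [_ rel]]]]]]]; exists f; split=> //.
exact: can_inj fK.
Qed.

Theorem lemma1 :
  exists phi : fo3, sentence phi /\
    forall (W : Type) (S : W -> W -> Prop), inhabited W ->
      (models S phi <-> iso_to_sub_pentagon S).
Proof.
exists phi; split; first exact: phi_sentence.
move=> W S [x0]; split.
- move=> /(_ (fun=> x0)) /sat_phi ax.
  have [f emb] := pentagon_embedding x0 ax.
  exact: embedding_iso x0 f emb.
- move=> /iso_embedding [f emb] e; apply/sat_phi/universal_pentagon_axioms.
  exact: embedding_universal_axioms emb pentagon_universal_axioms.
Qed.
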